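(* For a real number $k\ge 1$, let $x_0(k)$ be the unique root of the equation $x-1-x^{\frac{k-1}{k}}=0$ in the interval $[1,\infty)$. Then $2\le x_0(k)<\max(k,e+2)$. *)

From Stdlib Require Import Reals.
Open Scope R_scope.

Definition f_root (k x : R) : R := x - 1 - Rpower x ((k - 1) / k).

From Stdlib Require Import Reals Lra Psatz.
Open Scope R_scope.

(* Write a = (k-1)/k.  Since a >= 0, the root satisfies x0 - 1 = x0^a >= 1.
   For the upper bound, x0^(1/k) = x0 / (x0 - 1) and the tangent line of exp
   give ln x0 * (x0 - 1) <= k.  On the other hand, the tangent line of exp at 1
   gives ln x >= 2 - e / x, which forces ln x * (x - 1) > x once x >= e + 2;
   so x0 >= max(k, e + 2) would give x0 < ln x0 * (x0 - 1) <= k <= x0. *)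

Lemma Rpower_ge_1 (x a : R) : 1 <= x -> 0 <= a -> 1 <= Rpower x a.
Proof.
  intros hx ha.
  rewrite <- (Rpower_O x) by lra.
  now apply Rle_Rpower.
Qed.

Lemma one_add_mul_ln_le_Rpower (x a : R) : 1 + a * ln x <= Rpower x a.
Proof. apply exp_ineq1_le. Qed.

Lemma two_sub_ln_mul_le_exp1 (x : R) : 0 < x -> (2 - ln x) * x <= exp 1.
Proof.
  intros hx.
  assert (e_split : exp (1 - ln x) * x = exp 1).
  { rewrite <- (exp_ln x) at 2 by exact hx.
    rewrite <- exp_plus. f_equal; ring. }
  pose proof (exp_ineq1_le (1 - ln x)).
  rewrite <- e_split.
  apply Rmult_le_compat_r; lra.
Qed.

Lemma ln_mul_pred_gt (x : R) : exp 1 + 2 <= x -> x < ln x * (x - 1).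
Proof.
  intros hx.
  pose proof (exp_pos 1).
  pose proof (two_sub_ln_mul_le_exp1 x ltac:(lra)).
  (* (2x - e)(x - 1) - x^2 = x (x - e - 2) + e > 0 *)
  nra.
Qed.

Lemma f_root_ge_2 (k x : R) :
  1 <= k -> 1 <= x -> f_root k x = 0 -> 2 <= x.
Proof.
  unfold f_root. intros hk hx hroot.
  assert (0 <= (k - 1) / k) by (apply Rle_mult_inv_pos; lra).
  pose proof (Rpower_ge_1 x ((k - 1) / k) hx).
  lra.
Qed.

Lemma f_root_Rpower_inv (k x : R) :
  1 <= k -> 1 <= x -> f_root k x = 0 -> Rpower x (/ k) * (x - 1) = x.
Proof.
  unfold f_root. intros hk hx hroot.
  replace (x - 1) with (Rpower x ((k - 1) / k)) by lra.
  rewrite <- Rpower_plus.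
  replace (/ k + (k - 1) / k) with 1 by (field; lra).
  apply Rpower_1; lra.
Qed.

Lemma f_root_ln_mul_pred_le (k x : R) :
  1 <= k -> 1 <= x -> f_root k x = 0 -> ln x * (x - 1) <= k.
Proof.
  intros hk hx hroot.
  pose proof (f_root_ge_2 k x hk hx hroot).
  pose proof (f_root_Rpower_inv k x hk hx hroot) as e_inv.
  pose proof (one_add_mul_ln_le_Rpower x (/ k)) as tangent.
  assert (hprod : (1 + / k * ln x) * (x - 1) <= x).
  { apply Rle_trans with (Rpower x (/ k) * (x - 1)); [|lra].
    apply Rmult_le_compat_r; lra. }
  assert (k * / k = 1) by (field; lra).
  nra.
Qed.

Theorem lemma3p2 (k x0 : R) (hk : 1 <= k)
  (hx1 : 1 <= x0) (hroot : f_root k x0 = 0) :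
  2 <= x0 /\ x0 < Rmax k (exp 1 + 2).
Proof.
  split; [exact (f_root_ge_2 k x0 hk hx1 hroot) |].
  destruct (Rlt_or_le x0 (Rmax k (exp 1 + 2))) as [hlt | hge]; [exact hlt |].
  exfalso.
  pose proof (Rmax_l k (exp 1 + 2)).
  pose proof (Rmax_r k (exp 1 + 2)).
  pose proof (f_root_ln_mul_pred_le k x0 hk hx1 hroot).
  pose proof (ln_mul_pred_gt x0 ltac:(lra)).
  lra.
Qed.
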